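(* Let $A\in \mathrm{Mat}_{m\times n}(\mathbb{C})$ have rank $r\ge 1$, let $A^+$ be its Moore–Penrose pseudoinverse (if $A=U\Sigma V^*$ is a thin singular value decomposition with $\Sigma=\mathrm{diag}(\sigma_1,\dots,\sigma_r)$, then $A^+=V\Sigma^{-1}U^*$), let $\mathbb{U}\subseteq\mathbb{C}^m$ be the column space of $A$ and $\mathbb{V}\subseteq\mathbb{C}^n$ the column space of $A^T$. Then the decomposition locus of $A$ is \[ \mathcal{D}_A=\{(\mathbf{u},\mathbf{v})\in \mathbb{U}\times\mathbb{V} \;:\; \mathbf{v}^T A^+\mathbf{u}\neq 0\}. \]
   Context: A matrix $A\in\mathbb{C}^m\otimes\mathbb{C}^n$ is identified with a tensor, and $\mathbf{u}\otimes\mathbf{v}$ with the rank-one matrix $\mathbf{u}\mathbf{v}^T$. The rank $\mathrm{rk}(T)$ of a tensor $T\in\mathbb{C}^{n_1}\otimes\cdots\otimes\mathbb{C}^{n_k}$ is the minimal $r$ such that $T$ is a sum of $r$ tensors of the form $\mathbf{v}^1\otimes\cdots\otimes\mathbf{v}^k$. The decomposition locus of $T$ is $\mathcal{D}_T=\{(\mathbf{v}^1,\dots,\mathbf{v}^k)\in\mathbb{C}^{n_1}\times\cdots\times\mathbb{C}^{n_k} : \mathrm{rk}(T-\lambda\,\mathbf{v}^1\otimes\cdots\otimes\mathbf{v}^k)=\mathrm{rk}(T)-1 \text{ for some }\lambda\in\mathbb{C}\}$; the forbidden locus $\mathcal{F}_T$ is its complement. *)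

From HB Require Import structures.
From mathcomp Require Import all_boot all_order all_algebra.
Set Implicit Arguments. Unset Strict Implicit. Unset Printing Implicit Defensive.
Import Order.TTheory GRing.Theory Num.Theory.
Local Open Scope ring_scope.

(* Scalars: an arbitrary numeric algebraically closed field C (e.g. the
   complex numbers), with complex conjugation Num.conj. *)

Definition conjT (C : numClosedFieldType) m n (A : 'M[C]_(m, n)) : 'M[C]_(n, m) :=
  map_mx Num.conj A^T.

Definition in_colspace (C : numClosedFieldType) m n (u : 'cV[C]_m) (A : 'M[C]_(m, n)) : bool :=
  (u^T <= A^T)%MS.

Definition is_thin_svd (C : numClosedFieldType) m n r (A : 'M[C]_(m, n))
  (U : 'M[C]_(m, r)) (s : 'rV[C]_r) (V : 'M[C]_(n, r)) : Prop :=
  [/\ conjT U *m U = 1%:M, conjT V *m V = 1%:M,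
      (forall i, 0 < s 0 i) & A = U *m diag_mx s *m conjT V].

Definition svd_pinv (C : numClosedFieldType) m n r
  (U : 'M[C]_(m, r)) (s : 'rV[C]_r) (V : 'M[C]_(n, r)) : 'M[C]_(n, m) :=
  V *m diag_mx (map_mx GRing.inv s) *m conjT U.

(* Decomposition locus of a matrix A (u (x) v identified with u v^T):
   (u,v) such that rk(A - lambda u v^T) = rk(A) - 1 for some lambda. *)
Definition decomp_locus (C : numClosedFieldType) m n (A : 'M[C]_(m, n))
  (u : 'cV[C]_m) (v : 'cV[C]_n) : Prop :=
  exists lambda : C, \rank (A - lambda *: (u *m v^T)) = (\rank A - 1)%N.

From HB Require Import structures.
From mathcomp Require Import all_boot all_order all_algebra zify.
Set Implicit Arguments.
Unset Strict Implicit.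
Unset Printing Implicit Defensive.
Import Order.TTheory GRing.Theory Num.Theory.
Local Open Scope ring_scope.

(* A rank-one update [A - u w] can only lower the rank of [A] if [u] lies in
   the column space and [w] in the row space of [A].  Writing [u = A y] and
   [w = E A]: if [E u = 0] then [A = (1 + u E) (A - u w)], so the rank does not
   drop; if [E u = 1] then [A - u w] kills [y] while [A] does not, so the rank
   drops by exactly one.  The scalar [E u] is intrinsic: for any generalized
   inverse [P] of [A] (i.e. [A P A = A]), such as the pseudoinverse,
   [w P u = E A P A y = E u]. *)

Section RankOneUpdate.

Variables (F : fieldType) (m n : nat) (A : 'M[F]_(m, n)).

Lemma mxrank_rank_one_update (u : 'cV_m) (w : 'rV_n) :
  (\rank A <= \rank (A - u *m w)%R + 1)%N.
Proof.
have := mxrank_add (A - u *m w) (u *m w); rewrite subrK => /leq_trans; apply.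
by rewrite leq_add2l (leq_trans (mxrankM_maxr _ _)) ?rank_leq_row.
Qed.

Lemma mxrank_sub_rank_one_notin_row (a : 'cV_m) (w : 'rV_n) :
  ~~ (w <= A)%MS -> (\rank A <= \rank (A - a *m w)%R)%N.
Proof.
move=> wNA; set M := A - a *m w.
have ltA : (\rank A < \rank (A + w)%MS)%N.
  have [_ eqA] := mxrank_leqif_sup (addsmxSl A w).
  rewrite ltn_neqAle eqA mxrankS ?addsmxSl // andbT.
  by apply: contra wNA; apply: submx_trans (addsmxSr A w).
have eqMA : \rank (A + w)%MS = \rank (M + w)%MS.
  apply/eqmx_rank/andP; split; rewrite addsmx_sub addsmxSr andbT.
  - rewrite -[X in (X <= _)%MS](subrK (a *m w) A).
    by rewrite addmx_sub_adds ?submxMl.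
  - by rewrite addmx_sub_adds // eqmx_opp submxMl.
have [leMw _] := mxrank_adds_leqif M w.
have := rank_leq_row w; have := leq_trans ltA (leq_trans (eq_leq eqMA) leMw).
lia.
Qed.

Lemma mxrank_sub_rank_one_orth (u : 'cV_m) (E : 'rV_m) :
  E *m u = 0 -> (\rank A <= \rank (A - u *m (E *m A))%R)%N.
Proof.
move=> Eu0.
have factorA : A = (1%:M + u *m E) *m (A - u *m (E *m A)).
  rewrite mulmxDl mul1mx mulmxBr -!mulmxA (mulmxA E u) Eu0 !mul0mx mulmx0.
  by rewrite subr0 mulmxA subrK.
by rewrite {1}factorA mxrankM_maxr.
Qed.

Lemma mxrank_sub_rank_one_drop (y : 'cV_n) (E : 'rV_m) :
  E *m (A *m y) = 1%:M -> \rank (A - A *m y *m (E *m A)) = (\rank A - 1)%N.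
Proof.
move=> Eu1; set u := A *m y in Eu1 *; set M := A - u *m (E *m A).
have My0 : M *m y = 0.
  by rewrite mulmxBl -!mulmxA -/u Eu1 mulmx1 subrr.
have u_neq0 : u != 0.
  by apply/eqP=> u0; have := matrix_nonzero1 F 0; rewrite -Eu1 u0 mulmx0 eqxx.
have MA : (M <= A)%MS.
  have -> : M = (1%:M - u *m E) *m A by rewrite /M mulmxBl mul1mx mulmxA.
  exact: submxMl.
have ltMA : (\rank M < \rank A)%N.
  have [leMA eqMA] := mxrank_leqif_sup MA.
  rewrite ltn_neqAle leMA andbT eqMA; apply: contra u_neq0 => /submxP[K AK].
  by rewrite /u AK -mulmxA My0 mulmx0.
have := mxrank_rank_one_update u (E *m A); rewrite -/M.
lia.
Qed.

End RankOneUpdate.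

Lemma mxrank_sub_rank_one_notin_col (F : fieldType) m n (A : 'M[F]_(m, n))
    (u : 'cV_m) (b : 'rV_n) :
  ~~ (u^T <= A^T)%MS -> (\rank A <= \rank (A - u *m b)%R)%N.
Proof.
move=> /(mxrank_sub_rank_one_notin_row b^T).
by rewrite -trmx_mul -linearB !mxrank_tr.
Qed.

Lemma ginv_row_col (F : fieldType) m n (A : 'M[F]_(m, n)) (P : 'M[F]_(n, m))
    (y : 'cV_n) (E : 'rV_m) :
  A *m P *m A = A -> E *m A *m P *m (A *m y) = E *m (A *m y).
Proof. by move=> APA; rewrite !mulmxA -(mulmxA E) -(mulmxA E) APA. Qed.

(* Positive rank is needed: [\rank A - 1] is truncated, so for [A = 0] the
   left-hand side holds for every [u] and [w]. *)
Theorem rank_one_decrement_ginvP (F : fieldType) m n (A : 'M[F]_(m, n))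
    (P : 'M[F]_(n, m)) (u : 'cV_m) (w : 'rV_n) :
  (0 < \rank A)%N -> A *m P *m A = A ->
  (exists lambda : F, \rank (A - lambda *: (u *m w)) = (\rank A - 1)%N) <->
  [/\ (u^T <= A^T)%MS, (w <= A)%MS & w *m P *m u != 0].
Proof.
move=> rA_gt0 APA; split.
- case=> lambda drop.
  have uA : (u^T <= A^T)%MS.
    apply: contraT => /(mxrank_sub_rank_one_notin_col (lambda *: w)).
    by rewrite -scalemxAr drop; lia.
  have wA : (w <= A)%MS.
    apply: contraT => /(mxrank_sub_rank_one_notin_row (lambda *: u)).
    by rewrite -scalemxAl drop; lia.
  split=> //; move: uA wA => /submxP[Y uY] /submxP[E wE].
  have uAY : u = A *m Y^T by rewrite -[u]trmxK uY trmx_mul trmxK.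
  subst u w; rewrite ginv_row_col //; apply: contraT; rewrite negbK => /eqP Eu0.
  have := mxrank_sub_rank_one_orth A (u := lambda *: (A *m Y^T)) (E := E).
  by rewrite -scalemxAr Eu0 scaler0 -scalemxAl drop => /(_ erefl); lia.
- case=> /submxP[Y uY] /submxP[E ->].
  have -> : u = A *m Y^T by rewrite -[u]trmxK uY trmx_mul trmxK.
  rewrite ginv_row_col //; set c := E *m (A *m Y^T) => c_neq0.
  have c00_neq0 : c 0 0 != 0.
    by apply: contra c_neq0 => /eqP c00; rewrite [c]mx11_scalar c00 raddf0.
  exists (c 0 0)^-1; rewrite scalemxAr scalemxAl.
  apply: mxrank_sub_rank_one_drop.
  by rewrite -scalemxAl -/c {2}[c]mx11_scalar scale_scalar_mx mulVf.
Qed.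

Lemma diag_mx_mulV (F : fieldType) r (s : 'rV[F]_r) :
  (forall i, s 0 i != 0) -> diag_mx s *m diag_mx (map_mx GRing.inv s) = 1%:M.
Proof.
move=> s_neq0; apply/matrixP => i j; rewrite mul_diag_mx !mxE.
by case: eqVneq => [->|_]; rewrite ?mulr1n ?mulfV ?mulr0n ?mulr0.
Qed.

Lemma svd_pinv_ginv (C : numClosedFieldType) m n r (A : 'M[C]_(m, n))
    (U : 'M[C]_(m, r)) (s : 'rV[C]_r) (V : 'M[C]_(n, r)) :
  is_thin_svd A U s V -> A *m svd_pinv U s V *m A = A.
Proof.
case=> UU VV s_gt0 ->; rewrite /svd_pinv !mulmxA.
rewrite -(mulmxA _ (conjT V) V) VV mulmx1.
rewrite -(mulmxA U (diag_mx s)) diag_mx_mulV => [|i]; last by rewrite gt_eqF.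
by rewrite mulmx1 -(mulmxA _ (conjT U) U) UU mulmx1.
Qed.

Theorem proposition3p1 (C : numClosedFieldType) (m n : nat) (A : 'M[C]_(m, n))
  (U : 'M[C]_(m, \rank A)) (s : 'rV[C]_(\rank A)) (V : 'M[C]_(n, \rank A)) :
  (1 <= \rank A)%N ->
  is_thin_svd A U s V ->
  forall (u : 'cV[C]_m) (v : 'cV[C]_n),
    decomp_locus A u v <->
    [/\ in_colspace u A, in_colspace v A^T & v^T *m svd_pinv U s V *m u != 0].
Proof.
move=> rA_gt0 svdA u v; rewrite /in_colspace trmxK.
exact: rank_one_decrement_ginvP rA_gt0 (svd_pinv_ginv svdA).
Qed.
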